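(* Let $P$ be a program and let $\tau = \alpha \cdot \mathit{issue}(p,t)\cdot \beta\cdot \mathit{com}(p,t)$ be a minimal anomaly of $P$ such that $\mathit{issue}(p,t)$ happens before $\mathit{com}(p,t)$ through $\beta$. Then no event $a$ in $\beta$ writes to a shared variable that $\mathit{com}(p,t)$ writes to.
   Context: Programs: parallel compositions of processes, each a sequence of transactions (reads of shared variables into registers, writes of register expressions to shared variables, assume statements, delimited by begin and commit). Snapshot isolation (SI): a transaction reads/writes a local snapshot of the central memory taken at its begin and can commit (publishing its writes) only if no transaction committed after its begin wrote a variable it writes. Serializability: every transaction executes atomically. Traces: each transaction $t$ of process $p$ yields an issue event $\mathit{issue}(p,t)$ (begin, reads, local writes) and a commit event $\mathit{com}(p,t)$ (which performs the writes of $t$ on the central memory). Dependencies: $\mathsf{po}$ (program order), $\mathsf{rf}$ (write-read), $\mathsf{st}$ (store order between writes to the same variable), $\mathsf{cf}$ (conflict: a read does not see a write to the same variable that would affect it if visible), and issue-to-commit of the same transaction; $\mathsf{hb}^1$ is their union, $\mathsf{hb}$ its transitive closure. An anomaly of $P$ is a trace of an SI execution of $P$ that is not a trace of any serializable execution. ''$a$ happens before $b$ through $\beta$'' in a trace $\alpha\cdot a\cdot\beta\cdot b\cdot\gamma$ means there is a nonempty subsequence $c_1\cdots c_n$ of $\beta$ with $c_i\to_{\mathsf{hb}^1}c_{i+1}$ for all $i\in[0,n]$, $c_0=a$, $c_{n+1}=b$. A transaction is delayed in a trace if its issue happens before its commit through the events between them; an anomaly is minimal if it has the least number of delayed transactions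 among all anomalies of $P$. *)

From mathcomp Require Import all_boot.
Set Implicit Arguments. Unset Strict Implicit. Unset Printing Implicit Defensive.

Definition var := nat.
Definition reg := nat.
Definition val := nat.
Definition regfile := reg -> val.

Inductive instr :=
| IRead of reg & var
| IWrite of var & (regfile -> val)
| IAssume of (regfile -> bool).

Definition transaction := seq instr.
Definition process := seq transaction.
(* a program is a parallel composition of processes; process p = nth p *)
Definition program := seq process.

Definition event := (bool * (nat * nat))%type.
Definition issue (p t : nat) : event := (false, (p, t)).
Definition com (p t : nat) : event := (true, (p, t)).
Definition is_com (e : event) : bool := e.1.
Definition txn_of (e : event) : nat * nat := e.2.

(* a labelled event: the event, the shared variables it reads from the
   snapshot (external reads), and the shared variables it writes *)
Definition lab := (event * (seq var * seq var))%type.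
Definition lab_ev (l : lab) : event := l.1.
Definition lab_reads (l : lab) : seq var := l.2.1.
Definition lab_writes (l : lab) : seq var := l.2.2.

Fixpoint run_body (snap : var -> val) (lw : var -> option val) (rf : regfile)
    (rd wr : seq var) (b : transaction)
    : option (regfile * (var -> option val) * seq var * seq var) :=
  match b with
  | [::] => Some (rf, lw, rd, wr)
  | IRead r x :: b' =>
      let v := if lw x is Some v then v else snap x in
      let rd' := if lw x is Some _ then rd else rcons rd x in
      run_body snap lw (fun r' => if r' == r then v else rf r') rd' wr b'
  | IWrite x e :: b' =>
      run_body snap (fun y => if y == x then Some (e rf) else lw y) rf rd (rcons wr x) b'
  | IAssume c :: b' => if c rf then run_body snap lw rf rd wr b' else None
  end.

Record pending := Pending {
  pd_txn : nat;
  pd_lw : var -> option val;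
  pd_wr : seq var;
  pd_conf : seq var              (* vars written by commits since its begin *)
}.

Record state := State {
  st_mem : var -> val;
  st_regs : nat -> regfile;
  st_next : nat -> nat;
  st_pend : nat -> option pending
}.

Definition init_state : state :=
  State (fun _ => 0) (fun _ _ => 0) (fun _ => 0) (fun _ => None).

Definition upd {T : Type} (f : nat -> T) (k : nat) (v : T) : nat -> T :=
  fun k' => if k' == k then v else f k'.

Inductive si_step (P : program) : state -> lab -> state -> Prop :=
| StepIssue (s : state) (p t : nat) rf' lw rd wr :
    p < size P -> st_pend s p = None -> st_next s p = t ->
    t < size (nth [::] P p) ->
    run_body (st_mem s) (fun _ => None) (st_regs s p) [::] [::]
             (nth [::] (nth [::] P p) t) = Some (rf', lw, rd, wr) ->
    si_step P s (issue p t, (rd, wr))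
      (State (st_mem s) (upd (st_regs s) p rf') (upd (st_next s) p t.+1)
             (upd (st_pend s) p (Some (Pending t lw wr [::]))))
| StepCommit (s : state) (p : nat) (pd : pending) :
    st_pend s p = Some pd ->
    ~~ has (fun x => x \in pd_conf pd) (pd_wr pd) ->
    si_step P s (com p (pd_txn pd), ([::], pd_wr pd))
      (State (fun x => if pd_lw pd x is Some v then v else st_mem s x)
             (st_regs s) (st_next s)
             (fun q => if q == p then None else
                 if st_pend s q is Some pq then
                   Some (Pending (pd_txn pq) (pd_lw pq) (pd_wr pq) (pd_conf pq ++ pd_wr pd))
                 else None)).

Inductive si_reach (P : program) : state -> seq lab -> Prop :=
| Reach0 : si_reach P init_state [::]
| ReachS s tr l s' : si_reach P s tr -> si_step P s l s' -> si_reach P s' (rcons tr l).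

Definition ldflt : lab := (issue 0 0, ([::], [::])).
Definition evs (tr : seq lab) : seq event := map lab_ev tr.
Definition ev_at (tr : seq lab) (i : nat) : event := lab_ev (nth ldflt tr i).
Definition pos (tr : seq lab) (e : event) : nat := index e (evs tr).
Definition lab_of (tr : seq lab) (e : event) : lab := nth ldflt tr (pos tr e).

Definition complete (tr : seq lab) : Prop :=
  forall p t, issue p t \in evs tr -> com p t \in evs tr.

Definition si_exec (P : program) (tr : seq lab) : Prop :=
  (exists s, si_reach P s tr) /\ complete tr.

(* serializable executions: every transaction executes atomically, i.e. each
   issue event is immediately followed by its commit *)
Definition ser_exec (P : program) (tr : seq lab) : Prop :=
  (exists s, si_reach P s tr) /\
  forall i, i < size tr -> ~~ is_com (ev_at tr i) ->
    i.+1 < size tr /\ ev_at tr i.+1 = (true, txn_of (ev_at tr i)).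

Definition last_writer (tr : seq lab) (i : nat) (x : var) : option event :=
  foldl (fun acc (l : lab) => if is_com (lab_ev l) && (x \in lab_writes l)
                              then Some (lab_ev l) else acc) None (take i tr).

Definition po (tr : seq lab) (a b : event) : bool :=
  [&& a \in evs tr, b \in evs tr, (txn_of a).1 == (txn_of b).1 &
      (txn_of a).2 < (txn_of b).2].

Definition rf (tr : seq lab) (a b : event) : bool :=
  [&& a \in evs tr, b \in evs tr, is_com a, ~~ is_com b &
      has (fun x => last_writer tr (pos tr b) x == Some a) (lab_reads (lab_of tr b))].

Definition st (tr : seq lab) (a b : event) : bool :=
  [&& a \in evs tr, b \in evs tr, is_com a, is_com b, pos tr a < pos tr b &
      has (fun x => x \in lab_writes (lab_of tr b)) (lab_writes (lab_of tr a))].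

Definition cf (tr : seq lab) (a b : event) : bool :=
  [&& a \in evs tr, b \in evs tr, ~~ is_com a, is_com b, pos tr a < pos tr b,
      txn_of a != txn_of b &
      has (fun x => x \in lab_writes (lab_of tr b)) (lab_reads (lab_of tr a))].

Definition itc (tr : seq lab) (a b : event) : bool :=
  [&& a \in evs tr, b \in evs tr, ~~ is_com a, is_com b & txn_of a == txn_of b].

Definition hb1 (tr : seq lab) (a b : event) : bool :=
  [|| po tr a b, rf tr a b, st tr a b, cf tr a b | itc tr a b].

Definition same_trace (tr1 tr2 : seq lab) : Prop :=
  (forall e, (e \in evs tr1) = (e \in evs tr2)) /\
  (forall a b, [/\ po tr1 a b = po tr2 a b, rf tr1 a b = rf tr2 a b,
                   st tr1 a b = st tr2 a b & cf tr1 a b = cf tr2 a b]).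

Definition anomaly (P : program) (tr : seq lab) : Prop :=
  si_exec P tr /\ ~ (exists tr', ser_exec P tr' /\ same_trace tr tr').

(* the event at position i happens before the event at position j through the
   events strictly between them: a nonempty subsequence c_1..c_n of those events
   with an hb1-chain from position i through c_1..c_n to position j *)
Definition hb_through (tr : seq lab) (i j : nat) : bool :=
  [exists m : (j - i.+1).-tuple bool,
     let cs := mask m (iota i.+1 (j - i.+1)) in
     (cs != [::]) && path (fun k l => hb1 tr (ev_at tr k) (ev_at tr l)) i (rcons cs j)].

Definition delayed_at (tr : seq lab) (k : nat) : bool :=
  let e := ev_at tr k in
  let c := (true, txn_of e) in
  [&& ~~ is_com e, c \in evs tr, k < pos tr c & hb_through tr k (pos tr c)].

Definition ndelayed (tr : seq lab) : nat := count (delayed_at tr) (iota 0 (size tr)).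

Definition minimal_anomaly (P : program) (tr : seq lab) : Prop :=
  anomaly P tr /\ forall tr', anomaly P tr' -> ndelayed tr <= ndelayed tr'.

From mathcomp Require Import all_boot.
Set Implicit Arguments. Unset Strict Implicit. Unset Printing Implicit Defensive.

(* Between issue(p,t) and com(p,t) the transaction (p,t) is pending, and every
   commit in that interval adds the variables it writes to its conflict set;
   since com(p,t) passes the SI commit check, no such commit writes a variable
   of com(p,t).  An issue event in the interval writes the same variables as
   its own commit, which, the trace being complete and ending with com(p,t),
   also lies in the interval. *)

Inductive run (P : program) : state -> seq lab -> state -> Prop :=
| Run0 s : run P s [::] s
| RunS s l s' ls s'' : si_step P s l s' -> run P s' ls s'' -> run P s (l :: ls) s''.

Section Runs.

Variable P : program.

Lemma run_cons s l ls s' :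
  run P s (l :: ls) s' <-> exists2 s1, si_step P s l s1 & run P s1 ls s'.
Proof.
split=> [Hr | [s1 Hs Hr]]; last exact: RunS Hs Hr.
by inversion Hr; subst; exists s'0.
Qed.

Lemma run1 s l s' : run P s [:: l] s' <-> si_step P s l s'.
Proof.
split=> [/run_cons[s1 Hs Hr] | Hs]; last exact: RunS Hs (Run0 _ _).
by inversion Hr; subst.
Qed.

Lemma run_cat s ls1 ls2 s' :
  run P s (ls1 ++ ls2) s' <-> exists2 sm, run P s ls1 sm & run P sm ls2 s'.
Proof.
elim: ls1 s => [|l ls1 IH] s /=.
  split=> [Hr | [sm Hr1 Hr2]]; first by exists s => //; apply: Run0.
  by inversion Hr1; subst.
split=> [/run_cons[s1 Hs /IH[sm Hr1 Hr2]] | [sm /run_cons[s1 Hs Hr1] Hr2]].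
  by exists sm => //; apply/run_cons; exists s1.
by apply/run_cons; exists s1 => //; apply/IH; exists sm.
Qed.

Lemma reach_run_cat s tr ls s' :
  si_reach P s tr -> run P s ls s' -> si_reach P s' (tr ++ ls).
Proof.
move=> HR Hr; elim: Hr tr HR => [s0 | s0 l s1 ls0 s2 Hs _ IH] tr HR.
  by rewrite cats0.
by rewrite -cat_rcons; apply: IH; apply: ReachS HR Hs.
Qed.

Lemma reach_runE s tr : si_reach P s tr <-> run P init_state tr s.
Proof.
split=> [|Hr]; last exact: reach_run_cat (Reach0 P) Hr.
elim=> [|s0 tr0 l s1 _ IH Hs]; first exact: Run0.
by rewrite -cats1; apply/run_cat; exists s0 => //; apply/run1.
Qed.

Lemma step_issue s l s' q t :
  si_step P s l s' -> lab_ev l = issue q t ->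
  st_pend s q = None /\ exists lw, st_pend s' q = Some (Pending t lw (lab_writes l) [::]).
Proof.
case=> [s0 p t0 rf' lw rd wr _ Hpend _ _ _ | s0 p pd _ _] //= [<- <-].
by split=> //; exists lw; rewrite /upd eqxx.
Qed.

Lemma step_com s l s' q t :
  si_step P s l s' -> lab_ev l = com q t ->
  exists pd, [/\ st_pend s q = Some pd, pd_txn pd = t,
    lab_writes l = pd_wr pd & ~~ has (mem (pd_conf pd)) (pd_wr pd)].
Proof. by case=> // s0 q0 pd Hpend Hnc [<- <-]; exists pd. Qed.

(* The first conjunct only serves to make the second one inductive. *)
Definition si_invariant (s : state) (tr : seq lab) : Prop :=
  (forall q t, com q t \in evs tr -> t < st_next s q) /\
  (forall q pd, st_pend s q = Some pd ->
     pd_txn pd < st_next s q /\ com q (pd_txn pd) \notin evs tr).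

Lemma si_invariant_reach s tr : si_reach P s tr -> si_invariant s tr.
Proof.
elim=> [|s0 tr0 l s1 _ [Inext Ipend] Hs]; first by split.
rewrite /si_invariant /evs map_rcons.
case: Hs Inext Ipend => [s2 p t rf' lw rd wr _ Hpend Hnext _ _ | s2 p pd Hpend _]
  Inext Ipend /=; split.
- move=> q t'; rewrite mem_rcons in_cons => /orP[// | /Inext].
  by rewrite /upd; case: eqP => [-> | //]; rewrite Hnext => /ltnW.
- move=> q pd; rewrite /upd mem_rcons in_cons; case: (q =P p) => [-> [<-] | _] /=.
    by split=> //; apply/negP => /Inext; rewrite Hnext ltnn.
  by move=> /Ipend[-> ->].
- move=> q t'; rewrite mem_rcons in_cons => /orP[/eqP[-> ->] | /Inext //].
  by case: (Ipend _ _ Hpend).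
- move=> q pd'; case: eqP => // Hq; case Eq: (st_pend s2 q) => [pq | //] [<-] /=.
  have [-> Hnin] := Ipend _ _ Eq; rewrite mem_rcons in_cons negb_or Hnin andbT.
  by split=> //; apply/eqP => -[/Hq].
Qed.

Lemma pending_uncommitted s tr q pd :
  si_reach P s tr -> st_pend s q = Some pd -> com q (pd_txn pd) \notin evs tr.
Proof. by move=> /si_invariant_reach[_ Ipend] /Ipend[]. Qed.

Definition com_by (q : nat) (l : lab) : bool :=
  is_com (lab_ev l) && ((txn_of (lab_ev l)).1 == q).

Lemma step_pending s l s' q pd :
  si_step P s l s' -> st_pend s q = Some pd -> ~~ com_by q l ->
  exists pd', [/\ st_pend s' q = Some pd', pd_txn pd' = pd_txn pd,
    pd_wr pd' = pd_wr pd, {subset pd_conf pd <= pd_conf pd'} &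
    is_com (lab_ev l) -> {subset lab_writes l <= pd_conf pd'}].
Proof.
case=> [s0 p t rf' lw rd wr _ Hpend _ _ _ | s0 p pd0 _ _] Hpd /=.
  exists pd; split=> //; rewrite /upd; case: eqP => // Eq.
  by rewrite -Eq Hpd in Hpend.
rewrite /com_by /= eq_sym => /negbTE->; rewrite Hpd.
by eexists; split=> // [x Hx | _ x Hx]; rewrite mem_cat Hx ?orbT.
Qed.

Lemma pending_persists s ls s' q pd :
  run P s ls s' -> st_pend s q = Some pd -> ~~ has (com_by q) ls ->
  exists pd', [/\ st_pend s' q = Some pd', pd_txn pd' = pd_txn pd,
    pd_wr pd' = pd_wr pd, {subset pd_conf pd <= pd_conf pd'} &
    forall l, l \in ls -> is_com (lab_ev l) -> {subset lab_writes l <= pd_conf pd'}].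
Proof.
move=> Hr; elim: Hr pd => [s0 | s0 l s1 ls0 s2 Hs _ IH] pd Hpd; first by exists pd; split.
rewrite /= negb_or => /andP[Hl Hls].
have [pd1 [Hpd1 T1 W1 C1 L1]] := step_pending Hs Hpd Hl.
have [pd2 [Hpd2 T2 W2 C2 L2]] := IH _ Hpd1 Hls.
exists pd2; split=> [||| x /C1 /C2 //|]; rewrite ?T2 ?W2 //.
by move=> l0; rewrite in_cons => /predU1P[-> /L1 Hw x /Hw /C2 | ] //; apply: L2.
Qed.

Lemma pending_committed s ls s' q pd :
  run P s ls s' -> st_pend s q = Some pd -> has (com_by q) ls ->
  exists2 c, c \in ls & lab_ev c = com q (pd_txn pd) /\ lab_writes c = pd_wr pd.
Proof.
move=> Hr Hpd Hhas; move: Hr; case: (split_find Hhas) => c ls1 ls2 Hc Hn.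
rewrite cat_rcons => /run_cat[sm /pending_persists/(_ Hpd Hn)[pdm [Hpdm T W _ _]]].
move=> /run_cons[sc Hs _].
move: Hc; rewrite /com_by; case Ec: (lab_ev c) => [[] [q' t']] //= /eqP Eq.
have [pdc [Hpdc Tc Wc _]] := step_com Hs Ec.
move: Hpdc; rewrite Eq Hpdm => -[Epd].
exists c; first by rewrite mem_cat mem_head orbT.
by rewrite Ec Wc Eq -Tc -Epd T W.
Qed.

End Runs.

Section IssueToCommit.

Variables (P : program) (pre beta : seq lab) (lc : lab) (p : nat) (pd : pending).
Variables s1 s2 sF : state.
Hypothesis reach_pre : si_reach P s1 pre.
Hypothesis pend_p : st_pend s1 p = Some pd.
Hypothesis run_beta : run P s1 beta s2.
Hypothesis step_lc : si_step P s2 lc sF.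
Hypothesis lc_commits_pd : lab_ev lc = com p (pd_txn pd).

Lemma pending_at_commit :
  exists2 pd2, st_pend s2 p = Some pd2 &
    [/\ pd_txn pd2 = pd_txn pd, lab_writes lc = pd_wr pd2 &
        ~~ has (mem (pd_conf pd2)) (pd_wr pd2)].
Proof. by have [pd2 []] := step_com step_lc lc_commits_pd; exists pd2. Qed.

Lemma no_commit_of_issuer_between : ~~ has (com_by p) beta.
Proof.
apply/negP => /(pending_committed run_beta pend_p)[c Hc [Ec _]].
have [pd2 Hpd2 [Et _ _]] := pending_at_commit.
have := pending_uncommitted (reach_run_cat reach_pre run_beta) Hpd2.
by rewrite Et /evs map_cat mem_cat -Ec (map_f lab_ev Hc) orbT.
Qed.

Lemma commit_between_disjoint (c : lab) (x : var) :
  c \in beta -> is_com (lab_ev c) -> x \in lab_writes c -> x \notin lab_writes lc.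
Proof.
move=> Hc Hcom Hx; apply/negP => Hxlc.
have [pdb [Hpdb _ _ _ Lconf]] :=
  pending_persists run_beta pend_p no_commit_of_issuer_between.
have [pd2 Hpd2 [_ Wlc Nc]] := pending_at_commit.
move: Hpd2; rewrite Hpdb => -[Epd]; subst pd2.
by move/hasP: Nc; apply; exists x; [rewrite -Wlc | exact: Lconf Hx].
Qed.

Lemma issue_between_committed_between (a : lab) :
  complete (pre ++ beta ++ [:: lc]) -> a \in beta -> ~~ is_com (lab_ev a) ->
  exists2 c, c \in beta & is_com (lab_ev c) /\ lab_writes c = lab_writes a.
Proof.
move=> Hcomplete Ha.
case Ea: (lab_ev a) => [[] [q t]] // _.
have [b1 [b2 Ebeta]] : exists b1 b2, beta = b1 ++ a :: b2.
  by case/splitPr: Ha => b1 b2; exists b1, b2.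
move: (run_beta); rewrite Ebeta => /run_cat[sa Rb1 /run_cons[sa' Sa Rb2]].
have [Hqa [lwa Hqa']] := step_issue Sa Ea.
have Hnb1 : ~~ has (com_by p) b1.
  by move: no_commit_of_issuer_between; rewrite Ebeta has_cat negb_or => /andP[].
have [pda [Hpda _ _ _ _]] := pending_persists Rb1 pend_p Hnb1.
have Hqp : q != p by apply/eqP => Eq; rewrite Eq Hpda in Hqa.
have Rrest : run P sa' (b2 ++ [:: lc]) sF.
  by apply/run_cat; exists s2 => //; apply/run1.
have [|Hnq] := boolP (has (com_by q) (b2 ++ [:: lc])).
  move=> /(pending_committed Rrest Hqa')[c Hc [Ec Wc]].
  exists c; last by rewrite Ec Wc.
  move: Hc; rewrite mem_cat mem_seq1 => /orP[Hc | /eqP Eclc].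
    by rewrite mem_cat in_cons Hc !orbT.
  by move: Ec; rewrite Eclc lc_commits_pd => -[/eqP]; rewrite eq_sym (negbTE Hqp).
have [pdF [HpdF TF _ _ _]] := pending_persists Rrest Hqa' Hnq.
have HRF : si_reach P sF (pre ++ beta ++ [:: lc]).
  by apply: reach_run_cat reach_pre _; apply/run_cat; exists s2 => //; apply/run1.
have Hissued : issue q t \in evs (pre ++ beta ++ [:: lc]).
  by rewrite /evs !map_cat !mem_cat -[issue q t]Ea (map_f lab_ev Ha) orbT.
by have := pending_uncommitted HRF HpdF; rewrite TF /= Hcomplete.
Qed.

End IssueToCommit.

Theorem lemma3 (P : program) (alpha beta : seq lab) (li lc : lab) (p t : nat) :
  minimal_anomaly P (alpha ++ li :: beta ++ [:: lc]) ->
  lab_ev li = issue p t -> lab_ev lc = com p t ->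
  hb_through (alpha ++ li :: beta ++ [:: lc]) (size alpha) (size alpha + size beta).+1 ->
  forall a : lab, a \in beta ->
  forall x : var, x \in lab_writes a -> x \notin lab_writes lc.
Proof.
move=> [[[[sF HR] Hcomplete] _] _] Hli Hlc _ a Ha x Hxa.
move/reach_runE/run_cat: HR => [s0 /reach_runE R0].
move=> /run_cons[s1 Si /run_cat[s2 Rbeta /run1 Slc]].
have [_ [lw Hp1]] := step_issue Si Hli.
have R1 := ReachS R0 Si.
rewrite -cat_rcons in Hcomplete.
have disjoint_lc := commit_between_disjoint R1 Hp1 Rbeta Slc Hlc.
have [Hcom | Hiss] := boolP (is_com (lab_ev a)); first exact: disjoint_lc Ha Hcom Hxa.
have [c Hc [Hcom Wc]] :=
  issue_between_committed_between R1 Hp1 Rbeta Slc Hlc Hcomplete Ha Hiss.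
by apply: disjoint_lc Hc Hcom _; rewrite Wc.
Qed.
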